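(* Let $\mathscr{M}_n$ be the monoid of $n\times n$ Boolean matrices with at least one $1$ in every row and every column, under Boolean matrix multiplication. For all $\alpha,\beta\in\mathscr{M}_n$, with Green's relations taken in $\mathscr{M}_n$: (1) $\alpha\,\mathcal{L}\,\beta$ iff $\langle R(\alpha)\rangle=\langle R(\beta)\rangle$; (2) $\alpha\,\mathcal{R}\,\beta$ iff $\langle C(\alpha)\rangle=\langle C(\beta)\rangle$; (3) $\alpha\,\mathcal{H}\,\beta$ iff $\langle R(\alpha)\rangle=\langle R(\beta)\rangle$ and $\langle C(\alpha)\rangle=\langle C(\beta)\rangle$.
   Context: Boolean arithmetic uses $1+1=1$; rows and columns are vectors in $\{0,1\}^n$, added coordinatewise in this arithmetic and compared coordinatewise ($u\le v$ iff $u_i=1$ implies $v_i=1$). $\mathscr{M}_n$ is isomorphic to the monoid of multipermutations on $[n]$ (binary relations in which every element has a successor and a predecessor) under composition of relations. For $\alpha\in\mathscr{M}_n$: $R(\alpha)$ is the set of rows and $C(\alpha)$ the set of columns of $\alpha$; the row space $V(\alpha)$ is the set of all Boolean sums of rows of $\alpha$ together with the zero vector, and the column space $W(\alpha)$ likewise for columns. $\langle R(\alpha)\rangle=\{\rho\in V(\alpha)\setminus\{0\}:\rho\le\alpha_j\text{ for some row }\alpha_j\text{ of }\alpha\}$ and $\langle C(\alpha)\rangle=\{\kappa\in W(\alpha)\setminus\{0\}:\kappa\le\gamma\text{ for some column }\gamma\text{ of }\alpha\}$. *)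

From mathcomp Require Import all_boot all_order all_algebra.
Set Implicit Arguments. Unset Strict Implicit. Unset Printing Implicit Defensive.

Definition bmx (n : nat) := 'M[bool]_n.

Definition bmul n (A B : bmx n) : bmx n :=
  (\matrix_(i < n, j < n) [exists k : 'I_n, A i k && B k j])%R.

Definition inMn n (A : bmx n) : bool :=
  [forall i : 'I_n, exists j : 'I_n, A i j] &&
  [forall j : 'I_n, exists i : 'I_n, A i j].

(* Green's relations taken in the monoid M_n (a monoid, so S^1 = S). *)
Definition greenL n (A B : bmx n) : Prop :=
  (exists2 G : bmx n, inMn G & A = bmul G B) /\
  (exists2 D : bmx n, inMn D & B = bmul D A).
Definition greenR n (A B : bmx n) : Prop :=
  (exists2 G : bmx n, inMn G & A = bmul B G) /\
  (exists2 D : bmx n, inMn D & B = bmul A D).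
Definition greenH n (A B : bmx n) : Prop := greenL A B /\ greenR A B.

(* A Boolean vector in {0,1}^n is identified with its support {set 'I_n};
   Boolean sum = union, coordinatewise order = inclusion, zero = set0. *)
Definition brow n (A : bmx n) (i : 'I_n) : {set 'I_n} := [set j | A i j].
Definition bcol n (A : bmx n) (j : 'I_n) : {set 'I_n} := [set i | A i j].

(* Row space V(A): all Boolean sums of rows, together with zero
   (the empty sum gives zero). *)
Definition rowspace n (A : bmx n) : {set {set 'I_n}} :=
  [set \bigcup_(i in S) brow A i | S : {set 'I_n}].
Definition colspace n (A : bmx n) : {set {set 'I_n}} :=
  [set \bigcup_(j in S) bcol A j | S : {set 'I_n}].

Definition genR n (A : bmx n) : {set {set 'I_n}} :=
  [set v in rowspace A | (v != set0) && [exists i : 'I_n, v \subset brow A i]].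
Definition genC n (A : bmx n) : {set {set 'I_n}} :=
  [set v in colspace A | (v != set0) && [exists j : 'I_n, v \subset bcol A j]].

From mathcomp Require Import all_boot all_order all_algebra.
Set Implicit Arguments. Unset Strict Implicit. Unset Printing Implicit Defensive.

(* Rows of [G B] are sums of rows of [B], so [B = D A] with every column of
   [D] nonzero makes each row of [A] lie below a row of [B]; hence
   L-related matrices have the same <R>.  Conversely, if <R(A)> = <R(B)>,
   every row of [A] is the sum of the rows of [B] below it, so [A = G B] for
   the residual [G_ik = (row_k B <= row_i A)], and [G] lies in M_n.  The
   relation R is L for the transposes, and H = L /\ R. *)

Section BooleanMatrices.
Local Open Scope ring_scope.
Variable n : nat.
Implicit Types A B D G : bmx n.

Definition row_total A := forall i, exists j, A i j.
Definition col_total A := forall j, exists i, A i j.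

Lemma inMnP A : reflect (row_total A /\ col_total A) (inMn A).
Proof.
apply: (iffP andP) => [[/forallP rA /forallP cA]|[rA cA]].
  by split=> i; apply/existsP.
by split; apply/forallP => i; apply/existsP.
Qed.

Lemma brow_inj A B : (forall i, brow A i = brow B i) -> A = B.
Proof.
by move=> eAB; apply/matrixP => i j; move/setP/(_ j): (eAB i); rewrite !inE.
Qed.

Lemma brow_bmul G B i : brow (bmul G B) i = \bigcup_(k | G i k) brow B k.
Proof.
apply/setP => j; rewrite inE mxE; apply/existsP/bigcupP.
  by case=> k /andP[Gik Bkj]; exists k; rewrite ?inE.
by case=> k Gik; rewrite inE => Bkj; exists k; rewrite Gik.
Qed.

Lemma rowspaceP B (v : {set 'I_n}) :
  reflect (v = \bigcup_(k | brow B k \subset v) brow B k) (v \in rowspace B).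
Proof.
apply: (iffP imsetP) => [[S _ ->]|ev]; last first.
  exists [set k | brow B k \subset v] => //.
  by rewrite {1}ev; apply: eq_bigl => k; rewrite inE.
apply/eqP; rewrite eqEsubset; apply/andP; split; last by apply/bigcupsP.
by apply/bigcupsP => i iS; apply: (bigcup_max i) => //; apply: bigcup_sup.
Qed.

Lemma brow_rowspace B k : brow B k \in rowspace B.
Proof. by apply/imsetP; exists [set k]; rewrite ?big_set1. Qed.

Lemma rowspace_bigcup (I : finType) (P : pred I) (F : I -> {set 'I_n}) B :
  (forall i, P i -> F i \in rowspace B) -> \bigcup_(i | P i) F i \in rowspace B.
Proof.
move=> FB; apply/rowspaceP/eqP; rewrite eqEsubset; apply/andP; split; last first.
  by apply/bigcupsP.
apply/bigcupsP => i Pi; rewrite (rowspaceP _ _ (FB i Pi)).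
apply/bigcupsP => k sBF; apply: (bigcup_max k) => //.
exact: subset_trans sBF (bigcup_sup i Pi).
Qed.

Lemma rowspace_bmul G B : rowspace (bmul G B) \subset rowspace B.
Proof.
apply/subsetP => _ /imsetP[S _ ->]; apply: rowspace_bigcup => i _.
by rewrite brow_bmul; apply: rowspace_bigcup => k _; apply: brow_rowspace.
Qed.

Lemma brow_sub_bmul D A i :
  col_total D -> exists k, brow A i \subset brow (bmul D A) k.
Proof. by case/(_ i) => k Dki; exists k; rewrite brow_bmul (bigcup_sup i). Qed.

Lemma genRP A (v : {set 'I_n}) :
  reflect [/\ v \in rowspace A, v != set0 & exists i, v \subset brow A i]
          (v \in genR A).
Proof. by rewrite inE; apply: (iffP and3P) => -[vA v0 /existsP]. Qed.

Lemma brow_genR A i : row_total A -> brow A i \in genR A.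
Proof.
case/(_ i) => j Aij; apply/genRP; split; first exact: brow_rowspace.
  by apply/set0Pn; exists j; rewrite inE.
by exists i.
Qed.

Lemma genR_subset A B G D :
  col_total D -> A = bmul G B -> B = bmul D A -> genR A \subset genR B.
Proof.
move=> cD eA eB; apply/subsetP => v /genRP[vA v0 [i sAi]].
apply/genRP; split=> //.
  by move: vA; rewrite eA; apply/subsetP/rowspace_bmul.
have [k sBk] := brow_sub_bmul A i cD.
by exists k; rewrite eB (subset_trans sAi).
Qed.

Definition lresidual A B : bmx n := \matrix_(i, k) (brow B k \subset brow A i).

Lemma lresidualK A B :
  (forall i, brow A i \in rowspace B) -> bmul (lresidual A B) B = A.
Proof.
move=> AB; apply: brow_inj => i; rewrite brow_bmul [RHS](rowspaceP _ _ (AB i)).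
by apply: eq_bigl => k; rewrite mxE.
Qed.

Lemma row_total_bmul G B : row_total (bmul G B) -> row_total G.
Proof.
by move=> rGB i; have [j /[!mxE] /existsP[k /andP[Gik _]]] := rGB i; exists k.
Qed.

Lemma genR_eq_factor A B :
  inMn A -> inMn B -> genR A = genR B -> exists2 G, inMn G & A = bmul G B.
Proof.
move=> /inMnP[rA _] /inMnP[rB _] eAB.
have AB i : brow A i \in rowspace B.
  by have /[!eAB] /genRP[] := brow_genR i rA.
have eA := esym (lresidualK AB).
exists (lresidual A B) => //; apply/inMnP; split.
  by apply: (@row_total_bmul _ B); rewrite -eA.
move=> k; have /[!(esym eAB)] /genRP[_ _ [i sBA]] := brow_genR k rB.
by exists i; rewrite mxE.
Qed.

Lemma greenL_genR A B : inMn A -> inMn B -> greenL A B <-> genR A = genR B.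
Proof.
move=> mA mB; split=> [[[G /inMnP[_ cG] eA] [D /inMnP[_ cD] eB]]|eAB].
  by apply/eqP; rewrite eqEsubset (genR_subset cD eA eB) (genR_subset cG eB eA).
by split; apply: genR_eq_factor; rewrite ?eAB.
Qed.

Lemma trmx_bmul A B : (bmul A B)^T = bmul B^T A^T.
Proof.
apply/matrixP => i j; rewrite !mxE.
by apply: eq_existsb => k; rewrite !mxE andbC.
Qed.

Lemma inMn_trmx A : inMn A^T = inMn A.
Proof.
rewrite /inMn andbC.
by congr andb; apply: eq_forallb => i; apply: eq_existsb => j; rewrite mxE.
Qed.

Lemma greenR_trmx A B : greenR A B <-> greenL A^T B^T.
Proof.
have factor_trmx (X Y : bmx n) :
    (exists2 G, inMn G & X = bmul Y G) <-> (exists2 G, inMn G & X^T = bmul G Y^T).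
  split=> -[G mG eX]; exists G^T; rewrite ?inMn_trmx //.
    by rewrite eX trmx_bmul.
  by rewrite -[X]trmxK eX trmx_bmul trmxK.
rewrite /greenR /greenL; have := factor_trmx A B; have := factor_trmx B A; tauto.
Qed.

Lemma genC_trmx A : genC A = genR A^T.
Proof.
have bcolT j : bcol A j = brow A^T j by apply/setP => i; rewrite !inE mxE.
have colspaceT : colspace A = rowspace A^T.
  by apply: eq_imset => S; apply: eq_bigr => j _.
apply/setP => v; rewrite !inE colspaceT.
by congr (_ && (_ && _)); apply: eq_existsb => j; rewrite bcolT.
Qed.

End BooleanMatrices.

Theorem theorem4p2 (n : nat) (A B : bmx n) :
  inMn A -> inMn B ->
  [/\ greenL A B <-> genR A = genR B,
      greenR A B <-> genC A = genC B &
      greenH A B <-> (genR A = genR B /\ genC A = genC B)].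
Proof.
move=> mA mB.
have hL := greenL_genR mA mB.
have hR : greenR A B <-> genC A = genC B.
  rewrite !genC_trmx; apply: iff_trans (greenR_trmx A B) _.
  by apply: greenL_genR; rewrite inMn_trmx.
by split=> //; rewrite /greenH; tauto.
Qed.
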